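(* For $\zeta^0,\zeta^1\in\mathbb C$ and $n\in\mathbb Z$, \[ \sum_{k=0}^{N-1}(\zeta^0)_k^{-1}\,\omega^{k(\zeta^1-n)}=\omega^n\,\omega^{(N-1)(\zeta^0+\zeta^1)}\sum_{k=0}^{N-1}(-\zeta^1+n)_k^{-1}\,\omega^{-k\zeta^0}. \]
   Context: $N\ge2$, $\omega=e^{2\pi i/N}$, $\omega^x=e^{2\pi ix/N}$. For $\zeta\in\mathbb C$ and $k\ge0$, $(\zeta)_k^{-1}=(1-\omega^{\zeta+1})(1-\omega^{\zeta+2})\cdots(1-\omega^{\zeta+k})$. *)

From Stdlib Require Import Reals.
From Coquelicot Require Import Coquelicot.
Open Scope R_scope.

Definition cexp (z : C) : C :=
  (exp (Re z) * cos (Im z), exp (Re z) * sin (Im z)).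

Definition omega_pow (N : nat) (x : C) : C :=
  cexp (Cmult (Cmult (RtoC (2 * PI)) Ci) (Cdiv x (RtoC (INR N)))).

(* (zeta)_k^{-1} = (1 - omega^{zeta+1}) ... (1 - omega^{zeta+k}) *)
Fixpoint poch_inv (N : nat) (z : C) (k : nat) : C :=
  match k with
  | O => RtoC 1
  | S k' => Cmult (poch_inv N z k')
                  (Cminus (RtoC 1) (omega_pow N (Cplus z (RtoC (INR (S k'))))))
  end.

Fixpoint csum (f : nat -> C) (n : nat) : C :=
  match n with
  | O => RtoC 0
  | S n' => Cplus (csum f n') (f n')
  end.

From Stdlib Require Import Reals ZArith Lra.
From Coquelicot Require Import Coquelicot.
From HB Require Import structures.
From mathcomp Require Import all_boot all_algebra.
From mathcomp Require Import Rstruct.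
From mathcomp Require Import ring zify.

(* With q := ω, a := ω^ζ0 and b := ω^(ζ1 - n), one has (ζ0)_k^{-1} = (aq; q)_k,
   and since ω^(nN) = 1 the theorem becomes the duality
     Σ_{k<N} (aq; q)_k b^k = (ab)^(N-1) Σ_{k<N} (q/b; q)_k a^(-k)
   for a primitive N-th root of unity q. Multiplying out (q/b; q)_k, this is the
   value at X = b of the polynomial identity
     Σ_{k<N} (aq; q)_k X^k = Σ_{k<N} (aX)^(N-1-k) (X - q) ... (X - q^k).
   Both sides solve the q-difference equation
     (1 - X) p(X) + a q X p(qX) = 1 - (1 - a^N) X^N :
   the left side by telescoping, the right side by telescoping together with
   (X - 1)(X - q) ... (X - q^(N-1)) = X^N - 1, which also gives (aq; q)_N = 1 - a^N.
   Comparing coefficients shows that this equation has at most one solution. *)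

Set Implicit Arguments. Unset Strict Implicit. Unset Printing Implicit Defensive.
Import GRing.Theory.
Local Open Scope ring_scope.

Section QDifferenceEquation.
Variables (K : fieldType) (q : K).

Definition qdilate (p : {poly K}) : {poly K} := p \Po (q *: 'X).

Lemma coef_qdilate p i : (qdilate p)`_i = q ^+ i * p`_i.
Proof.
elim/poly_ind: p i => [|p c IHp] i; first by rewrite /qdilate comp_poly0 !coef0 mulr0.
rewrite /qdilate comp_poly_MXaddC -scalerAr coefD coefZ coefMX coefC coefD coefMX coefC.
case: i => [|i] /=; first by rewrite mulr0 add0r expr0 mul1r.
by rewrite IHp !addr0 mulrA -exprS.
Qed.

Definition qdiff (a : K) (p : {poly K}) : {poly K} :=
  p * (1 - 'X) + (a * q) *: ('X * qdilate p).

Lemma qdiff_is_zmod_morphism a : zmod_morphism (qdiff a).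
Proof.
by move=> p r; rewrite /qdiff /qdilate comp_polyB mulrBl (mulrBr 'X) scalerBr opprD addrACA.
Qed.

HB.instance Definition _ a :=
  GRing.isZmodMorphism.Build {poly K} {poly K} (qdiff a) (qdiff_is_zmod_morphism a).

Lemma coef0_qdiff a p : (qdiff a p)`_0 = p`_0.
Proof. by rewrite coefD coefZ coefXM mulrBr mulr1 coefB coefMX /= subr0 mulr0 addr0. Qed.

Lemma coefS_qdiff a p i : (qdiff a p)`_i.+1 = p`_i.+1 - (1 - a * q ^+ i.+1) * p`_i.
Proof.
rewrite coefD coefZ coefXM mulrBr mulr1 coefB coefMX /= coef_qdilate.
by rewrite exprS; ring.
Qed.

Lemma qdiff_eq0 a p : qdiff a p = 0 -> p = 0.
Proof.
move=> qdiff_p0; apply/polyP; elim=> [|i IHi]; rewrite coef0.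
  by rewrite -(coef0_qdiff a) qdiff_p0 coef0.
by have := coefS_qdiff a p i; rewrite qdiff_p0 IHi !coef0 mulr0 subr0.
Qed.

Lemma qdiff_inj a : injective (qdiff a).
Proof. exact/raddf_inj/qdiff_eq0. Qed.

Lemma qdiff_monomial a c k :
  qdiff a (c *: 'X^k) = c *: 'X^k - (c * (1 - a * q ^+ k.+1)) *: 'X^(k.+1).
Proof.
rewrite /qdiff /qdilate comp_polyZ comp_Xn_poly -!mul_polyC.
by rewrite ?(rmorphM, rmorphB, rmorph1, rmorphXn) /= !exprS exprMn; ring.
Qed.

Definition qpoch (a : K) (k : nat) : K := \prod_(1 <= j < k.+1) (1 - a * q ^+ j).

Lemma qpoch0 a : qpoch a 0 = 1.
Proof. by rewrite /qpoch big_geq. Qed.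

Lemma qpochS a k : qpoch a k.+1 = qpoch a k * (1 - a * q ^+ k.+1).
Proof. by rewrite /qpoch big_nat_recr. Qed.

Definition qpoch_series (a : K) (n : nat) : {poly K} := \sum_(k < n) qpoch a k *: 'X^k.

Lemma qdiff_qpoch_series a n : qdiff a (qpoch_series a n) = 1 - qpoch a n *: 'X^n.
Proof.
rewrite raddf_sum (eq_bigr _ (fun k _ => qdiff_monomial _ _ _)) /=.
under eq_bigr do rewrite -qpochS.
rewrite sumrB -!(big_mkord xpredT (fun k => qpoch a k *: 'X^k)).
rewrite -(big_mkord xpredT (fun k => qpoch a k.+1 *: 'X^(k.+1))).
by rewrite -opprB -sumrB telescope_sumr // opprB qpoch0 scale1r.
Qed.

Definition qprod (m k : nat) : {poly K} := \prod_(m <= j < m + k) ('X - (q ^+ j)%:P).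

Lemma qprod0 m : qprod m 0 = 1.
Proof. by rewrite /qprod addn0 big_geq. Qed.

Lemma qprodSr m k : qprod m k.+1 = qprod m k * ('X - (q ^+ (m + k))%:P).
Proof. by rewrite /qprod addnS big_nat_recr // leq_addr. Qed.

Lemma qprod0S k : qprod 0 k.+1 = ('X - 1) * qprod 1 k.
Proof. by rewrite /qprod big_ltn // expr0 add1n. Qed.

Lemma qdilate_qprod m k : qdilate (qprod m.+1 k) = q ^+ k *: qprod m k.
Proof.
elim: k => [|k IHk]; first by rewrite !qprod0 /qdilate -polyC1 comp_polyC scale1r.
rewrite !qprodSr /qdilate comp_polyM -/(qdilate _) IHk comp_polyB comp_polyX comp_polyC.
by rewrite addSn -!mul_polyC ?(rmorphM, rmorphB, rmorphXn) /= !exprS; ring.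
Qed.

Definition qdual_series (a : K) (n : nat) : {poly K} :=
  \sum_(k < n) a ^+ (n.-1 - k) *: ('X^(n.-1 - k) * qprod 1 k).

Section PrimitiveRoot.
Variable n : nat.
Hypothesis q_prim : n.-primitive_root q.

Let qn1 : q ^+ n = 1 := prim_expr_order q_prim.

Let qdual_tail a i := a ^+ (n - i) *: ('X^(n - i) * qprod 0 i).

Lemma qdiff_qdual_term a k : (k < n)%N ->
  qdiff a (a ^+ (n.-1 - k) *: ('X^(n.-1 - k) * qprod 1 k))
  = qdual_tail a k - qdual_tail a k.+1.
Proof.
move=> lt_kn; rewrite /qdual_tail.
set m := (n.-1 - k)%N.
have -> : (n - k = m.+1)%N by rewrite /m; lia.
have -> : (n - k.+1 = m)%N by rewrite /m; lia.
have qmk1 : (q%:P ^+ m * q%:P ^+ k * q%:P : {poly K}) = 1.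
  rewrite -!rmorphXn -!rmorphM -exprD -exprSr.
  have -> : ((m + k).+1 = n)%N by rewrite /m; lia.
  by rewrite qn1.
rewrite /qdiff /qdilate comp_polyZ comp_polyM comp_Xn_poly -/(qdilate _) qdilate_qprod qprod0S.
rewrite -!mul_polyC ?(rmorphM, rmorphB, rmorph1, rmorphXn) /= !exprS exprMn.
apply/eqP; rewrite -subr_eq0; apply/eqP.
transitivity ((q%:P ^+ m * q%:P ^+ k * q%:P - 1) * (a%:P ^+ m * a%:P * 'X^m * 'X * qprod 0 k)).
  by clearbody m; ring.
by rewrite qmk1 subrr mul0r.
Qed.

Lemma qdiff_qdual_series a : qdiff a (qdual_series a n) = 1 - (1 - a ^+ n) *: 'X^n.
Proof.
rewrite raddf_sum (eq_bigr _ (fun k _ => qdiff_qdual_term a (ltn_ord k))) /=.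
rewrite -(big_mkord xpredT (fun k => qdual_tail a k - qdual_tail a k.+1)).
rewrite sumrB -opprB -sumrB telescope_sumr // opprB /qdual_tail.
rewrite subn0 subnn qprod0 mulr1 expr0 scale1r mul1r /qprod add0n.
rewrite (factor_Xn_sub_1 q_prim) -!mul_polyC rmorphB rmorph1 !rmorphXn /=.
by ring.
Qed.

Lemma qpoch_prim a : qpoch a n = 1 - a ^+ n.
Proof.
have n_gt0 := prim_order_gt0 q_prim.
have [->|a0] := eqVneq a 0.
  by rewrite expr0n gtn_eqF // subr0 /qpoch big1 // => j _; rewrite mul0r subr0.
have shift : qpoch a n = \prod_(0 <= j < n) (1 - a * q ^+ j).
  by rewrite /qpoch big_nat_recr //= [RHS]big_ltn // expr0 qn1 mulrC.
have lin j : 1 - a * q ^+ j = a * ('X - (q ^+ j)%:P).[a^-1].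
  by rewrite hornerXsubC mulrBr mulfV.
rewrite shift (eq_bigr _ (fun j _ => lin j)) big_split /= -horner_prod.
rewrite (factor_Xn_sub_1 q_prim) prodr_const_nat subn0 hornerD hornerN hornerXn hornerC.
by rewrite mulrBr mulr1 -exprMn mulfV // expr1n.
Qed.

Lemma qpoch_series_dual a : qpoch_series a n = qdual_series a n.
Proof.
apply: (qdiff_inj (a := a)).
by rewrite qdiff_qpoch_series qdiff_qdual_series qpoch_prim.
Qed.

Lemma horner_qprod1 b k : b != 0 -> (qprod 1 k).[b] = b ^+ k * qpoch b^-1 k.
Proof.
move=> b0; have -> : b ^+ k = \prod_(1 <= j < k.+1) b by rewrite prodr_const_nat subn1.
rewrite /qprod add1n horner_prod /qpoch -big_split /=.
by apply: eq_bigr => j _; rewrite hornerXsubC mulrBr mulr1 mulrA mulfV // mul1r.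
Qed.

Lemma qpoch_sum_duality a b : a != 0 -> b != 0 ->
  \sum_(k < n) qpoch a k * b ^+ k
  = (a * b) ^+ n.-1 * \sum_(k < n) qpoch b^-1 k * a ^- k.
Proof.
move=> a0 b0; transitivity (qpoch_series a n).[b].
  by rewrite horner_sum; apply: eq_bigr => k _; rewrite hornerZ hornerXn.
rewrite qpoch_series_dual horner_sum mulr_sumr; apply: eq_bigr => k _.
rewrite hornerZ hornerM hornerXn horner_qprod1 //.
rewrite [in RHS](_ : n.-1 = n.-1 - k + k)%N; last by have := ltn_ord k; lia.
by rewrite exprD !exprMn; field; rewrite !expf_neq0.
Qed.

End PrimitiveRoot.

End QDifferenceEquation.

(* [C] unfolds to [R * R], which already carries MathComp's componentwise ring
   structure, so the complex field structure is put on an alias. *)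
Definition CC : Type := C.

HB.instance Definition _ := Choice.copy CC (R * R)%type.

Lemma Cplus_addA : associative (Cplus : CC -> CC -> CC).
Proof. by move=> x y z; rewrite Cplus_assoc. Qed.

Lemma Cplus_add0 : left_id (RtoC 0 : CC) Cplus.
Proof. exact: Cplus_0_l. Qed.

Lemma Cplus_addN : left_inverse (RtoC 0 : CC) Copp Cplus.
Proof. by move=> x; rewrite Cplus_comm Cplus_opp_r. Qed.

HB.instance Definition _ :=
  GRing.isZmodule.Build CC Cplus_addA Cplus_comm Cplus_add0 Cplus_addN.

Lemma Cmult_mulA : associative (Cmult : CC -> CC -> CC).
Proof. by move=> x y z; rewrite Cmult_assoc. Qed.

Lemma Cmult_mul1 : left_id (RtoC 1 : CC) Cmult.
Proof. exact: Cmult_1_l. Qed.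

Lemma Cmult_mulDl : left_distributive (Cmult : CC -> CC -> CC) Cplus.
Proof. by move=> x y z; rewrite Cmult_plus_distr_r. Qed.

Lemma C1_neq0 : (RtoC 1 : CC) != RtoC 0.
Proof. by apply/eqP => -[/R1_neq_R0]. Qed.

HB.instance Definition _ :=
  GRing.Zmodule_isComNzRing.Build CC Cmult_mulA Cmult_comm Cmult_mul1 Cmult_mulDl C1_neq0.

Lemma Cinv_mulV (x : CC) : x != 0 -> (Cinv x : CC) * x = 1.
Proof. by move=> /eqP; apply: Cinv_l. Qed.

Lemma Cinv0 : (Cinv 0 : CC) = 0.
Proof. by rewrite /Cinv /= Ropp_0 !Rdiv_0_l. Qed.

HB.instance Definition _ := GRing.ComNzRing_isField.Build CC Cinv_mulV Cinv0.

Lemma CplusE (x y : C) : Cplus x y = (x : CC) + y. Proof. by []. Qed.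
Lemma CmultE (x y : C) : Cmult x y = (x : CC) * y. Proof. by []. Qed.
Lemma CoppE (x : C) : Copp x = - (x : CC). Proof. by []. Qed.
Lemma CdivE (x y : C) : Cdiv x y = (x : CC) / (y : CC). Proof. by []. Qed.
Lemma CminusE (x y : C) : Cminus x y = (x : CC) - y. Proof. by []. Qed.

Lemma csumE (f : nat -> C) n : csum f n = \sum_(k < n) (f k : CC).
Proof. by elim: n => [|n IHn]; rewrite ?big_ord0 // big_ord_recr -IHn. Qed.

Lemma cexpD (x y : CC) : cexp (x + y) = (cexp x : CC) * cexp y.
Proof.
case: x y => [a b] [c d]; rewrite /cexp /= exp_plus cos_plus sin_plus.
by congr pair; rewrite /= !(RplusE, RminusE, RmultE); ring.
Qed.

Lemma cexp0 : cexp 0 = 1 :> CC.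
Proof. by rewrite /cexp /= exp_0 cos_0 sin_0 Rmult_1_r Rmult_0_r. Qed.

Local Open Scope R_scope.

Lemma cos_neq1_0_2PI t : 0 < t < 2 * PI -> cos t <> 1.
Proof.
move=> [t_gt0 t_lt2PI] cos1.
have sin0 : sin t = 0 by have := sin2_cos2 t; rewrite cos1 /Rsqr; nra.
have [|[tPI|]] := sin_eq_O_2PI_0 t (Rlt_le _ _ t_gt0) (Rlt_le _ _ t_lt2PI) sin0; try lra.
by move: cos1; rewrite tPI cos_PI; lra.
Qed.

Local Close Scope R_scope.

Section Omega.
Variable N : nat.

(* The cast matters for numerals: a bare [1] at type [C] would be the unit
   [(1, 1)] of the componentwise ring [R * R]. *)
Local Notation om x := (omega_pow N (x : CC) : CC).

Lemma omega_powD (x y : CC) : om (x + y) = om x * om y.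
Proof. by rewrite /omega_pow -cexpD !CdivE !CmultE !CplusE -mulrDr -mulrDl. Qed.

Lemma omega_pow0 : om 0 = 1.
Proof. by rewrite /omega_pow CdivE mul0r CmultE mulr0 cexp0. Qed.

Lemma omega_pow_mulN (x : CC) : om x * om (- x) = 1.
Proof. by rewrite -omega_powD CplusE CoppE subrr omega_pow0. Qed.

Lemma omega_pow_neq0 (x : CC) : om x != 0.
Proof.
by apply: contra_eq_neq (omega_pow_mulN x) => ->; rewrite mul0r eq_sym oner_neq0.
Qed.

Lemma omega_powN (x : CC) : om (- x) = (om x)^-1.
Proof. by rewrite -[LHS](mulKf (omega_pow_neq0 x)) omega_pow_mulN mulr1. Qed.

Lemma omega_pow_natmul k (x : CC) : om (RtoC (INR k) * x) = om x ^+ k.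
Proof.
elim: k => [|k IHk]; first by rewrite CmultE mul0r omega_pow0.
by rewrite S_INR RtoC_plus CmultE CplusE mulrDl mul1r omega_powD -CmultE IHk exprSr.
Qed.

Definition omega : CC := om 1.

Lemma omega_expn k : omega ^+ k = om (RtoC (INR k)).
Proof. by rewrite /omega -omega_pow_natmul CmultE mulr1. Qed.

Lemma poch_inv_qpoch (z : CC) k : poch_inv N z k = qpoch omega (om z) k.
Proof.
elim: k => [|k IHk]; first by rewrite qpoch0.
by rewrite qpochS -IHk /= CmultE CminusE CplusE omega_powD omega_expn.
Qed.

Hypothesis N_gt0 : (0 < N)%N.

Local Open Scope R_scope.

Let INR_N_gt0 : 0 < INR N.
Proof. by apply/lt_0_INR/ssrnat.ltP. Qed.

Lemma omega_pow_real r :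
  om (RtoC r) = (cos (2 * PI * r / INR N), sin (2 * PI * r / INR N)).
Proof.
rewrite /omega_pow -RtoC_div; last exact: Rgt_not_eq.
rewrite /cexp /= !(Rmult_0_l, Rmult_0_r, Rmult_1_r, Rplus_0_l, Rplus_0_r, Rminus_0_r).
by rewrite exp_0 !Rmult_1_l Rmult_div_assoc.
Qed.

Lemma omega_angle_bounds j : (0 < j < N)%N -> 0 < 2 * PI * INR j / INR N < 2 * PI.
Proof.
move=> /andP[/ssrnat.ltP/lt_0_INR j_gt0 /ssrnat.ltP/lt_INR j_ltN].
have := PI_RGT_0; set t := 2 * PI * INR j / INR N.
have tN : t * INR N = 2 * PI * INR j.
  by rewrite /t /Rdiv Rmult_assoc Rinv_l ?Rmult_1_r //; apply: Rgt_not_eq.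
split; nra.
Qed.

Local Close Scope R_scope.

Lemma omega_prim : N.-primitive_root omega.
Proof.
apply/andP; split => //; apply/forallP => i; apply/eqP; rewrite unity_rootE.
have [->|ne_iN] := eqVneq i.+1 N.
  rewrite omega_expn omega_pow_real Rmult_div_l ?cos_2PI ?sin_2PI ?eqxx //.
  exact: Rgt_not_eq.
apply/negbTE/eqP; rewrite omega_expn omega_pow_real => -[cos1 _].
have i_bounds : (0 < i.+1 < N)%N by rewrite /= ltn_neqAle ne_iN ltn_ord.
exact: cos_neq1_0_2PI (omega_angle_bounds i_bounds) cos1.
Qed.

Lemma omega_pow_IZR_expN (n : Z) : om (RtoC (IZR n)) ^+ N = 1.
Proof.
have omega_pow_INR_expN m : om (RtoC (INR m)) ^+ N = 1.
  by rewrite -omega_expn -exprM mulnC exprM (prim_expr_order omega_prim) expr1n.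
case: n => [|p|p]; first exact: omega_pow_INR_expN 0%N.
  by rewrite -positive_nat_Z -INR_IZR_INZ omega_pow_INR_expN.
rewrite IZR_NEG RtoC_opp omega_powN exprVn -positive_nat_Z -INR_IZR_INZ.
by rewrite omega_pow_INR_expN invr1.
Qed.

End Omega.

Theorem lemmaA8 (N : nat) (HN : (2 <= N)%coq_nat) (z0 z1 : C) (n : Z) :
  csum (fun k => Cmult (poch_inv N z0 k)
                       (omega_pow N (Cmult (RtoC (INR k)) (Cminus z1 (RtoC (IZR n)))))) N
  = Cmult (Cmult (omega_pow N (RtoC (IZR n)))
                 (omega_pow N (Cmult (RtoC (INR (N - 1)%coq_nat)) (Cplus z0 z1))))
          (csum (fun k => Cmult (poch_inv N (Cplus (Copp z1) (RtoC (IZR n))) k)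
                                (omega_pow N (Copp (Cmult (RtoC (INR k)) z0)))) N).
Proof.
have N_gt0 : (0 < N)%N by apply/ssrnat.ltP; lia.
set a : CC := omega_pow N z0; set w : CC := omega_pow N (RtoC (IZR n)).
set b : CC := omega_pow N (Cminus z1 (RtoC (IZR n))).
have b_inv : omega_pow N (Cplus (Copp z1) (RtoC (IZR n))) = b^-1.
  by rewrite -omega_powN; congr omega_pow; rewrite CplusE !CoppE CminusE opprB addrC.
have z1_split : omega_pow N z1 = b * w.
  by rewrite -omega_powD; congr omega_pow; rewrite CplusE CminusE subrK.
have -> : (N - 1)%coq_nat = N.-1 by lia.
rewrite !csumE CmultE CmultE omega_pow_natmul CplusE omega_powD z1_split.
under eq_bigr => k _ do rewrite CmultE poch_inv_qpoch omega_pow_natmul.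
under [in RHS]eq_bigr => k _ do
  rewrite CmultE poch_inv_qpoch b_inv CoppE omega_powN omega_pow_natmul.
have prefactor : w * (a * (b * w)) ^+ N.-1 = (a * b) ^+ N.-1.
  by rewrite mulrA exprMn mulrCA -exprS prednK // omega_pow_IZR_expN // mulr1.
by rewrite (qpoch_sum_duality (omega_prim N_gt0)) ?omega_pow_neq0 // prefactor.
Qed.
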